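(* Let $P\subset\mathbb{R}^d$ be a full-dimensional lattice polytope with codegree $a$. Then $P$ is nearly Gorenstein if and only if \[(C_P\cap\mathbb{Z}^{d+1})\setminus\{0\} \subseteq \big(\mathrm{int}(C_P)\cap\mathbb{Z}^{d+1}\big) + \big(\mathrm{ant}(C_P)\cap \mathbb{Z}^{d+1}\big).\] In particular, if $P$ is nearly Gorenstein, then \[P\cap\mathbb{Z}^d = \big(\mathrm{int}(C_P)_a\cap\mathbb{Z}^d\big) + \big(\mathrm{ant}(C_P)_{1-a}\cap\mathbb{Z}^d\big).\] The converse of the last statement also holds if $P$ has the integer decomposition property.
   Context: $\mathbf{k}$ is an infinite field. A lattice polytope $P\subset\mathbb{R}^d$ (vertices in $\mathbb{Z}^d$, full-dimensional) has facet presentation $P=\{x\in\mathbb{R}^d : n_F(x)\ge -h_F \text{ for all facets } F\}$, where each $n_F\in(\mathbb{Z}^d)^*$ is the primitive inner normal vector and $h_F\in\mathbb{Z}$. Define $C_P=\{(x,k)\in\mathbb{R}^{d+1}: n_F(x)\ge -kh_F \ \forall F\}$, $\mathrm{int}(C_P)=\{(x,k): n_F(x)> -kh_F\ \forall F\}$, and $\mathrm{ant}(C_P)=\{(x,k): n_F(x)\ge -kh_F-1\ \forall F\}$. For $X\subseteq\mathbb{R}^{d+1}$ and $k\in\mathbb{Z}$, $X_k=\{x\in\mathbb{R}^d: (x,k)\in X\}$. The Ehrhart ring is $A(P)=\mathbf{k}[\mathbf{t}^x s^k : k\in\mathbb{N},\ x\in kP\cap\mathbb{Z}^d]$, graded by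 $\deg(\mathbf{t}^xs^k)=k$, with graded maximal ideal $\mathbf{m}$ and canonical module $\omega$. The trace of $\omega$ is $\mathrm{tr}(\omega)=\sum_{\phi\in\mathrm{Hom}(\omega,A(P))}\phi(\omega)$; $P$ is nearly Gorenstein if $\mathbf{m}\subseteq \mathrm{tr}(\omega)$. The codegree of $P$ is $a=\min\{k\in\mathbb{Z}_{\ge1}: \mathrm{int}(kP)\cap\mathbb{Z}^d\neq\varnothing\}$. $P$ has the integer decomposition property (IDP) if for every positive integer $k$ every $x\in kP\cap\mathbb{Z}^d$ is a sum of $k$ lattice points of $P$. *)

From HB Require Import structures.
From mathcomp Require Import all_boot all_order all_algebra.
From mathcomp Require Import reals.
From mathcomp.multinomials Require Import monalg.

Set Implicit Arguments.
Unset Strict Implicit.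
Unset Printing Implicit Defensive.

Import Order.TTheory GRing.Theory Num.Theory.
Local Open Scope ring_scope.

(* A facet presentation of P is given by m primitive inner
   normals N i and integers h i:  P = {x : <N i, x> >= - h i}.          *)

Definition ipair (d : nat) (n x : 'rV[int]_d) : int := \sum_j n ord0 j * x ord0 j.

Definition rpair (R : numDomainType) (d : nat) (n : 'rV[int]_d) (x : 'rV[R]_d) : R :=
  \sum_j (n ord0 j)%:~R * x ord0 j.

Definition primitive (d : nat) (n : 'rV[int]_d) : Prop :=
  forall c : int, (forall j, (c %| n ord0 j)%Z) -> `|c| = 1.

Definition inP (R : numDomainType) (d m : nat) (N : 'I_m -> 'rV[int]_d)
  (h : 'I_m -> int) (x : 'rV[R]_d) : Prop :=
  forall i, - (h i)%:~R <= rpair (N i) x.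

Definition inConv (R : numDomainType) (d : nat) (V : seq 'rV[int]_d) (x : 'rV[R]_d) : Prop :=
  exists lam : 'I_(size V) -> R,
    [/\ forall i, 0 <= lam i, \sum_i lam i = 1 &
        x = \sum_i lam i *: map_mx (fun z : int => z%:~R) V`_i].

Definition lattice_polytope (R : numDomainType) (d m : nat) (N : 'I_m -> 'rV[int]_d)
  (h : 'I_m -> int) : Prop :=
  exists V : seq 'rV[int]_d, forall x : 'rV[R]_d, inP N h x <-> inConv V x.

Definition full_dim (R : numDomainType) (d m : nat) (N : 'I_m -> 'rV[int]_d)
  (h : 'I_m -> int) : Prop :=
  exists x : 'rV[R]_d, forall i, - (h i)%:~R < rpair (N i) x.

(* The presentation is irredundant: every inequality is needed, so that
   (P being full-dimensional) the inequalities are exactly the facets of P. *)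
Definition irredundant (R : numDomainType) (d m : nat) (N : 'I_m -> 'rV[int]_d)
  (h : 'I_m -> int) : Prop :=
  forall i, exists x : 'rV[R]_d,
    (forall j, j != i -> - (h j)%:~R <= rpair (N j) x) /\ rpair (N i) x < - (h i)%:~R.

(* Points of Z^{d+1} are pairs (x, k) with x in Z^d and k in Z.          *)

Definition inC (d m : nat) (N : 'I_m -> 'rV[int]_d) (h : 'I_m -> int)
  (p : 'rV[int]_d * int) : Prop :=
  forall i, - (p.2 * h i) <= ipair (N i) p.1.

Definition inInt (d m : nat) (N : 'I_m -> 'rV[int]_d) (h : 'I_m -> int)
  (p : 'rV[int]_d * int) : Prop :=
  forall i, - (p.2 * h i) < ipair (N i) p.1.

Definition inAnt (d m : nat) (N : 'I_m -> 'rV[int]_d) (h : 'I_m -> int)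
  (p : 'rV[int]_d * int) : Prop :=
  forall i, - (p.2 * h i) - 1 <= ipair (N i) p.1.

Definition is_codegree (d m : nat) (N : 'I_m -> 'rV[int]_d) (h : 'I_m -> int)
  (a : nat) : Prop :=
  [/\ (1 <= a)%N, exists x, inInt N h (x, a%:Z) &
      forall k : nat, (1 <= k)%N -> (k < a)%N -> forall x, ~ inInt N h (x, k%:Z)].

(* IDP: every lattice point of kP (k >= 1) is a sum of k lattice points of P.
   (kP cap Z^d = {x : n_F(x) >= -k h_F}.) *)
Definition IDP (d m : nat) (N : 'I_m -> 'rV[int]_d) (h : 'I_m -> int) : Prop :=
  forall k : nat, (0 < k)%N -> forall x : 'rV[int]_d, inC N h (x, k%:Z) ->
    exists v : 'I_k -> 'rV[int]_d, (forall i, inC N h (v i, 1)) /\ x = \sum_i v i.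

(* The monoid M0 d = {(x,k) in Z^d x N : k > 0 or x = 0}; its monoid algebra
   k[M0 d] contains the Ehrhart ring A(P) of every lattice polytope P in R^d
   (as 0P cap Z^d = {0}); the monomial t^x s^k is the basis element (x,k). *)

Definition m0_pred (d : nat) (p : 'rV[int]_d * nat) : bool := (p.2 == 0%N) ==> (p.1 == 0).

Record M0 (d : nat) := MkM0 { m0val : 'rV[int]_d * nat; m0P : m0_pred m0val }.

HB.instance Definition _ (d : nat) := [isSub for @m0val d].
HB.instance Definition _ (d : nat) := [Choice of M0 d by <:].

Section M0Monoid.
Variable d : nat.

Fact m0_one_proof : m0_pred ((0 : 'rV[int]_d), 0%N).
Proof. by rewrite /m0_pred /= eqxx. Qed.

Definition m0_one : M0 d := MkM0 m0_one_proof.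

Fact m0_mul_proof (p q : M0 d) :
  m0_pred ((m0val p).1 + (m0val q).1, ((m0val p).2 + (m0val q).2)%N).
Proof.
case: p q => [[x k] /= Hp] [[y l] /= Hq]; rewrite /m0_pred /= addn_eq0.
apply/implyP => /andP [/eqP k0 /eqP l0].
move: Hp Hq; rewrite /m0_pred /= k0 l0 /= => /eqP -> /eqP ->.
by rewrite addr0.
Qed.

Definition m0_mul (p q : M0 d) : M0 d := MkM0 (m0_mul_proof p q).

Fact m0_mulA : associative m0_mul.
Proof. by move=> p q r; apply: val_inj; rewrite /= addrA addnA. Qed.

Fact m0_mul1 : left_id m0_one m0_mul.
Proof. by move=> [[x k] Hp]; apply: val_inj; rewrite /= add0r add0n. Qed.

Fact m0_mulm1 : right_id m0_one m0_mul.
Proof. by move=> [[x k] Hp]; apply: val_inj; rewrite /= addr0 addn0. Qed.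

Fact m0_mulC : commutative m0_mul.
Proof. by move=> p q; apply: val_inj; rewrite /= addrC addnC. Qed.

Fact m0_unit (p q : M0 d) : m0_mul p q = m0_one -> p = m0_one /\ q = m0_one.
Proof.
case: p q => [[x k] Hp] [[y l] Hq] E.
have /= [_ /eqP] := congr1 (@m0val d) E.
rewrite addn_eq0 => /andP [/eqP k0 /eqP l0].
clear E; subst k l.
have x0 : x = 0 by apply/eqP; exact: Hp.
have y0 : y = 0 by apply/eqP; exact: Hq.
by subst x y; split; apply: val_inj.
Qed.

HB.instance Definition _ := Choice_isMonomialDef.Build (M0 d)
  m0_mulA m0_mul1 m0_mulm1 m0_unit.
HB.instance Definition _ := MonomialDef_isConomialDef.Build (M0 d) m0_mulC.

End M0Monoid.

Definition m0pt (d : nat) (p : M0 d) : 'rV[int]_d * int :=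
  ((m0val p).1, Posz (m0val p).2).

(* The Ehrhart ring A(P) = k[t^x s^k : k in N, x in kP cap Z^d], realised
   inside k[M0 d] as the k-span of these monomials (they form a monoid). *)
Definition inA (k : fieldType) (d m : nat) (N : 'I_m -> 'rV[int]_d) (h : 'I_m -> int)
  (f : {malg k[M0 d]}) : Prop :=
  forall p : M0 d, f@_p != 0 -> inC N h (m0pt p).

(* The graded maximal ideal m = A(P)_+ : elements of A(P) supported in
   positive degree. *)
Definition in_max_ideal (k : fieldType) (d m : nat) (N : 'I_m -> 'rV[int]_d)
  (h : 'I_m -> int) (f : {malg k[M0 d]}) : Prop :=
  inA N h f /\ forall p : M0 d, f@_p != 0 -> (0 < (m0val p).2)%N.

(* The canonical module of the normal ring A(P), realised (Danilov-Stanley) as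
   the ideal of A(P) spanned by the monomials t^x s^k with (x,k) in int(C_P). *)
Definition in_omega (k : fieldType) (d m : nat) (N : 'I_m -> 'rV[int]_d)
  (h : 'I_m -> int) (f : {malg k[M0 d]}) : Prop :=
  forall p : M0 d, f@_p != 0 -> inInt N h (m0pt p).

(* phi represents an element of Hom_{A(P)}(omega, A(P)): its restriction to omega
   is A(P)-linear with values in A(P) (values outside omega are irrelevant). *)
Definition is_hom_omega (k : fieldType) (d m : nat) (N : 'I_m -> 'rV[int]_d)
  (h : 'I_m -> int) (phi : {malg k[M0 d]} -> {malg k[M0 d]}) : Prop :=
  [/\ forall w, in_omega N h w -> inA N h (phi w),
      forall w1 w2, in_omega N h w1 -> in_omega N h w2 -> phi (w1 + w2) = phi w1 + phi w2 &
      forall a w, inA N h a -> in_omega N h w -> phi (a * w) = a * phi w].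

Definition in_trace (k : fieldType) (d m : nat) (N : 'I_m -> 'rV[int]_d)
  (h : 'I_m -> int) (f : {malg k[M0 d]}) : Prop :=
  exists (n : nat) (phi : 'I_n -> {malg k[M0 d]} -> {malg k[M0 d]})
         (w : 'I_n -> {malg k[M0 d]}),
    [/\ forall i, is_hom_omega N h (phi i), forall i, in_omega N h (w i) &
        f = \sum_i phi i (w i)].

Definition nearly_gorenstein (k : fieldType) (d m : nat) (N : 'I_m -> 'rV[int]_d)
  (h : 'I_m -> int) : Prop :=
  forall f : {malg k[M0 d]}, in_max_ideal N h f -> in_trace N h f.

Definition cone_cond (d m : nat) (N : 'I_m -> 'rV[int]_d) (h : 'I_m -> int) : Prop :=
  forall p : 'rV[int]_d * int, inC N h p -> p <> (0, 0) ->
    exists q r : 'rV[int]_d * int,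
      [/\ inInt N h q, inAnt N h r & p = (q.1 + r.1, q.2 + r.2)].

Definition slice_cond (d m : nat) (N : 'I_m -> 'rV[int]_d) (h : 'I_m -> int) (a : nat) : Prop :=
  forall x : 'rV[int]_d,
    inC N h (x, 1) <->
    exists y z : 'rV[int]_d,
      [/\ inInt N h (y, a%:Z), inAnt N h (z, 1 - a%:Z) & x = y + z].

(* The proof only looks at exponents of monomials.  A homomorphism
   phi : omega -> A(P) is k-linear on omega and commutes with multiplication by
   monomials, so if t^v occurs in phi(t^u) (u interior), then for every
   interior u' the monomial t^(u'+v-u) occurs in phi(t^u') and u'+v-u lies in
   C_P.  For every facet F there is an interior lattice point u' at lattice
   distance 1 from F (n_F is primitive and F contains lattice points), hence
   v - u is at distance at least -1 from every facet: v is interior plus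
   anticanonical.  Conversely, for r in ant(C_P) the shift t^u |-> t^(u+r) is
   a homomorphism omega -> A(P), and these shifts reach every monomial of m
   once every nonzero lattice point of C_P decomposes.
   For the slices, the height of the interior summand of a point of P is at
   least the codegree a, and when it exceeds a the anticanonical summand
   cancels an interior point of height a; under IDP a point of kP is a sum of k
   points of P, one of which is decomposed. *)

From HB Require Import structures.
From mathcomp Require Import all_boot all_order all_algebra.
From mathcomp Require Import reals.
From mathcomp.multinomials Require Import monalg.
From mathcomp Require Import finmap zify ring lra.

Set Implicit Arguments.
Unset Strict Implicit.
Unset Printing Implicit Defensive.
Import Order.TTheory GRing.Theory Num.Theory.
Local Open Scope ring_scope.

Fact ipair_is_zmod_morphism (d : nat) (n : 'rV[int]_d) : zmod_morphism (ipair n).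
Proof.
by move=> x y; rewrite /ipair -sumrB; apply: eq_bigr => j _; rewrite !mxE mulrBr.
Qed.
HB.instance Definition _ (d : nat) (n : 'rV[int]_d) :=
  GRing.isZmodMorphism.Build _ _ (ipair n) (ipair_is_zmod_morphism n).

Lemma ipairZ (d : nat) (n : 'rV[int]_d) (c : int) (x : 'rV[int]_d) :
  ipair n (c *: x) = c * ipair n x.
Proof. by rewrite /ipair mulr_sumr; apply: eq_bigr => j _; rewrite mxE mulrCA. Qed.

Lemma ipair_delta (d : nat) (n : 'rV[int]_d) (j : 'I_d) : ipair n (delta_mx 0 j) = n ord0 j.
Proof.
rewrite /ipair (bigD1 j) //= big1 => [|l /negbTE nl]; first by rewrite mxE !eqxx mulr1 addr0.
by rewrite mxE nl andbF mulr0.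
Qed.

Lemma primitive_bezout (d : nat) (n : 'rV[int]_d) : primitive n -> exists y, ipair n y = 1.
Proof.
move=> n_prim.
have partial_gcd j : (j <= d)%N -> exists g y,
    ipair n y = g /\ forall l : 'I_d, (l < j)%N -> (g %| n ord0 l)%Z.
  elim: j => [|j IHj] jd; first by exists 0, 0; rewrite raddf0.
  have [g [y [<- g_dvd]]] := IHj (ltnW jd).
  have [u [v Euv]] := Bezoutz (ipair n y) (n ord0 (Ordinal jd)).
  exists (gcdz (ipair n y) (n ord0 (Ordinal jd))), (u *: y + v *: delta_mx 0 (Ordinal jd)).
  split; first by rewrite -Euv raddfD /= !ipairZ ipair_delta.
  move=> l; rewrite ltnS leq_eqVlt => /orP [/eqP l_eq|/g_dvd l_dvd].
    by rewrite (_ : l = Ordinal jd) ?dvdz_gcdr //; apply: val_inj.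
  exact: dvdz_trans (dvdz_gcdl _ _) l_dvd.
have [g [y [Ey /(_ _ (ltn_ord _)) g_dvd]]] := partial_gcd d (leqnn d).
have [g1|g1] : g = 1 \/ g = -1 by move: (n_prim g g_dvd); lia.
  by exists y; rewrite Ey g1.
by exists (- y); rewrite raddfN /= Ey g1 opprK.
Qed.

Section Slack.
Variables (d m : nat) (N : 'I_m -> 'rV[int]_d) (h : 'I_m -> int).

Definition slack (i : 'I_m) (p : 'rV[int]_d * int) : int := ipair (N i) p.1 + p.2 * h i.

Fact slack_is_zmod_morphism i : zmod_morphism (slack i).
Proof. by move=> p q; rewrite /slack raddfB /= mulrBl; ring. Qed.
HB.instance Definition _ i :=
  GRing.isZmodMorphism.Build _ _ (slack i) (slack_is_zmod_morphism i).

Lemma inCE p : inC N h p <-> forall i, 0 <= slack i p.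
Proof. by split=> H i; have := H i; rewrite /slack; lia. Qed.

Lemma inIntE p : inInt N h p <-> forall i, 0 < slack i p.
Proof. by split=> H i; have := H i; rewrite /slack; lia. Qed.

Lemma inAntE p : inAnt N h p <-> forall i, -1 <= slack i p.
Proof. by split=> H i; have := H i; rewrite /slack; lia. Qed.

Lemma inInt_inC p : inInt N h p -> inC N h p.
Proof. by move=> p_int i; apply: ltW. Qed.

Lemma inC_addIntAnt q r : inInt N h q -> inAnt N h r -> inC N h (q + r).
Proof.
move=> /inIntE q_int /inAntE r_ant; apply/inCE => i; rewrite raddfD /=.
by have := q_int i; have := r_ant i; lia.
Qed.

Lemma inAnt_addC c r : inC N h c -> inAnt N h r -> inAnt N h (c + r).
Proof.
move=> /inCE c_C /inAntE r_ant; apply/inAntE => i; rewrite raddfD /=.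
by have := c_C i; have := r_ant i; lia.
Qed.

End Slack.

(** * Lattice geometry of P *)

Section Geometry.
Variables (R : realType) (d m : nat) (N : 'I_m -> 'rV[int]_d) (h : 'I_m -> int).
Hypothesis P_lattice : lattice_polytope R N h.
Hypothesis P_fulldim : full_dim R N h.

Local Notation intr_mx := (map_mx (fun z : int => z%:~R : R)).

Fact rpair_is_zmod_morphism (n : 'rV[int]_d) : zmod_morphism (@rpair R d n).
Proof.
by move=> x y; rewrite /rpair -sumrB; apply: eq_bigr => j _; rewrite !mxE mulrBr.
Qed.
HB.instance Definition _ (n : 'rV[int]_d) :=
  GRing.isZmodMorphism.Build _ _ (@rpair R d n) (rpair_is_zmod_morphism n).

Lemma rpairZ (n : 'rV[int]_d) (c : R) (x : 'rV[R]_d) : rpair n (c *: x) = c * rpair n x.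
Proof. by rewrite /rpair mulr_sumr; apply: eq_bigr => j _; rewrite mxE mulrCA. Qed.

Lemma rpair_intr_mx (n x : 'rV[int]_d) : rpair n (intr_mx x) = (ipair n x)%:~R.
Proof. by rewrite /rpair /ipair rmorph_sum; apply: eq_bigr => j _; rewrite mxE /= intrM. Qed.

Lemma lattice_polytope_coord_bounded (j : 'I_d) :
  exists B : R, forall x, inP N h x -> `|x ord0 j| <= B.
Proof.
have [V PV] := P_lattice.
exists (\sum_(i < size V) `|(V`_i ord0 j)%:~R : R|) => x /PV [lam [lam_ge0 lam_sum1 ->]].
rewrite summxE; apply: (le_trans (ler_norm_sum _ _ _)); apply: ler_sum => i _.
have lam_le1 : lam i <= 1 by rewrite -lam_sum1 (bigD1 i) //= lerDl sumr_ge0.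
by rewrite !mxE normrM ger0_norm // ler_piMl.
Qed.

Lemma lattice_polytope_recession (z y : 'rV[R]_d) :
  inP N h z -> (forall i, 0 <= rpair (N i) y) -> y = 0.
Proof.
move=> Pz y_rec; apply/rowP => j; rewrite mxE; apply/eqP/negP => /negP yj_neq0.
have [B PB] := lattice_polytope_coord_bounded j.
have yj_gt0 : 0 < `|y ord0 j| by rewrite normr_gt0.
pose t := (B + `|z ord0 j| + 1) / `|y ord0 j|.
have t_ge0 : 0 <= t.
  by rewrite divr_ge0 //; have := PB z Pz; have := normr_ge0 (z ord0 j); lra.
have Pzty : inP N h (z + t *: y).
  move=> i; rewrite raddfD /= rpairZ; apply: (le_trans (Pz i)).
  by rewrite lerDl mulr_ge0.
have := PB _ Pzty; rewrite !mxE.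
have := lerB_normD (t * y ord0 j) (z ord0 j).
by rewrite normrM ger0_norm // /t divfK ?gt_eqF // addrC; lra.
Qed.

Lemma lattice_cone_graded : (0 < m)%N -> forall p, inC N h p -> p = 0 \/ 0 < p.2.
Proof.
move=> m_gt0 [x k] Cxk /=.
have [x0 x0_int] := P_fulldim.
have Px0 : inP N h x0 by move=> i; apply: ltW.
have Cxk_real i : - (k%:~R * (h i)%:~R) <= rpair (N i) (intr_mx x).
  by rewrite rpair_intr_mx -intrM -mulrNz ler_int.
case: (ltgtP k 0) => [k_lt0|k_gt0|k0]; [exfalso | by right | left; subst k].
  pose y := intr_mx x - k%:~R *: x0.
  have y_pos i : 0 < rpair (N i) y.
    rewrite raddfB /= rpairZ.
    have := Cxk_real i; have := x0_int i; have : (k%:~R : R) < 0 by rewrite ltrz0.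
    move: (k%:~R : R) ((h i)%:~R : R) (rpair (N i) x0) => K H X; nra.
  have := y_pos (Ordinal m_gt0).
  by rewrite (lattice_polytope_recession Px0 (fun i => ltW (y_pos i))) raddf0 ltxx.
have x_eq0 : intr_mx x = 0.
  apply: (lattice_polytope_recession Px0) => i.
  by have := Cxk_real i; rewrite mul0r oppr0.
congr pair; apply/rowP => j; have /rowP/(_ j) := x_eq0.
by rewrite !mxE => /eqP; rewrite intr_eq0 => /eqP.
Qed.

End Geometry.

Section Facets.
Variables (R : realType) (d m : nat) (N : 'I_m -> 'rV[int]_d) (h : 'I_m -> int).
Hypothesis P_lattice : lattice_polytope R N h.
Hypothesis P_fulldim : full_dim R N h.
Hypothesis P_irredundant : irredundant R N h.

Local Notation intr_mx := (map_mx (fun z : int => z%:~R : R)).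

Lemma inConv_nth (V : seq 'rV[int]_d) (k : 'I_(size V)) : inConv V (intr_mx V`_k).
Proof.
exists (fun l => (l == k)%:R); split=> [l||]; first by case: eqP.
  by rewrite (bigD1 k) //= eqxx big1 ?addr0 // => l /negbTE ->.
by rewrite (bigD1 k) //= eqxx scale1r big1 ?addr0 // => l /negbTE ->; rewrite scale0r.
Qed.

Lemma facet_relint_point i : exists z : 'rV[R]_d,
  rpair (N i) z + (h i)%:~R = 0 /\ forall j, j != i -> 0 < rpair (N j) z + (h j)%:~R.
Proof.
have [x1 [x1_ge x1_lt]] := P_irredundant i.
have [x0 x0_int] := P_fulldim.
pose a0 := rpair (N i) x0 + (h i)%:~R; pose a1 := - (rpair (N i) x1 + (h i)%:~R).
have a0_gt0 : 0 < a0 by have := x0_int i; rewrite /a0; lra.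
have a1_gt0 : 0 < a1 by rewrite /a1; lra.
pose t := a0 / (a0 + a1).
have t_a : t * (a0 + a1) = a0 by rewrite /t divfK // gt_eqF // addr_gt0.
have t_ge0 : 0 <= t by rewrite /t divr_ge0 // ltW // addr_gt0.
have t_lt1 : t < 1 by nra.
exists ((1 - t) *: x0 + t *: x1).
have slack_seg j : rpair (N j) ((1 - t) *: x0 + t *: x1) + (h j)%:~R =
    (1 - t) * (rpair (N j) x0 + (h j)%:~R) + t * (rpair (N j) x1 + (h j)%:~R).
  by rewrite raddfD /= !rpairZ; ring.
split; first by rewrite slack_seg; move: t_a; rewrite /a0 /a1; nra.
by move=> j ji; rewrite slack_seg; have := x0_int j; have := x1_ge j ji; nra.
Qed.

Lemma conv_slack (V : seq 'rV[int]_d) (lam : 'I_(size V) -> R) j :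
  \sum_k lam k = 1 ->
  rpair (N j) (\sum_k lam k *: intr_mx V`_k) + (h j)%:~R =
  \sum_k lam k * (slack N h j (V`_k, 1))%:~R.
Proof.
move=> lam_sum1.
have -> : (h j)%:~R = \sum_k lam k * (h j)%:~R :> R by rewrite -mulr_suml lam_sum1 mul1r.
rewrite raddf_sum -big_split; apply: eq_bigr => k _.
by rewrite /= rpairZ rpair_intr_mx /slack mul1r -mulrDr intrD.
Qed.

Lemma facet_lattice_point i : exists w : 'rV[int]_d * int,
  slack N h i w = 0 /\ forall j, j != i -> 0 < slack N h j w.
Proof.
have [z [z_facet z_pos]] := facet_relint_point i.
have [V PV] := P_lattice.
have [|lam [lam_ge0 lam_sum1 z_conv]] := (PV z).1.
  move=> j; case: (eqVneq j i) => [->|ji]; first lra.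
  by have := z_pos j ji; lra.
pose c (k : 'I_(size V)) j := slack N h j (V`_k, 1).
have c_ge0 k j : 0 <= c k j.
  have /PV/(_ j) := inConv_nth k.
  by rewrite rpair_intr_mx -intrN ler_int /c /slack /= mul1r; lia.
have z_slack j : rpair (N j) z + (h j)%:~R = \sum_k lam k * (c k j)%:~R.
  by rewrite z_conv conv_slack.
have lam_facet k : lam k != 0 -> c k i = 0.
  move=> lam_k; have /esym/eqP := z_slack i; rewrite z_facet psumr_eq0; last first.
    by move=> l _; rewrite mulr_ge0 ?ler0z.
  by move/allP/(_ k (mem_index_enum k)); rewrite mulf_eq0 (negbTE lam_k) intr_eq0 => /eqP.
pose S := [pred k | c k i == 0].
exists (\sum_(k | S k) (V`_k, 1)).
have slack_w j : slack N h j (\sum_(k | S k) (V`_k, 1)) = \sum_(k | S k) c k j.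
  by rewrite raddf_sum.
split; first by rewrite slack_w big1 // => k /eqP.
move=> j ji; rewrite slack_w lt_neqAle sumr_ge0 // andbT eq_sym psumr_eq0 //.
apply/allP => /= S_zero; have := z_pos j ji; rewrite z_slack big1 ?ltxx // => k _.
case: (eqVneq (lam k) 0) => [->|/lam_facet c_facet]; first by rewrite mul0r.
by have /implyP/(_ (introT eqP c_facet))/eqP -> := S_zero k (mem_index_enum k); rewrite mulr0.
Qed.

Hypothesis N_primitive : forall i, primitive (N i).

Lemma facet_unit i : exists u, inInt N h u /\ slack N h i u = 1.
Proof.
have [w [w_facet w_pos]] := facet_lattice_point i.
have [y y1] := primitive_bezout (@N_primitive i).
(* u = y + K w: w vanishes on F only, and K w outweighs y on the other facets. *)
pose K : int := 1 + \sum_j `|ipair (N j) y|.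
have K_ge j : 1 + `|ipair (N j) y| <= K.
  by rewrite /K lerD2l (bigD1 j) //= lerDl sumr_ge0.
have slack_u j : slack N h j (y + K *: w.1, K * w.2) = ipair (N j) y + K * slack N h j w.
  by rewrite /slack /= raddfD /= ipairZ; ring.
exists (y + K *: w.1, K * w.2); split; last by rewrite slack_u y1 w_facet mulr0 addr0.
apply/inIntE => j; rewrite slack_u.
case: (eqVneq j i) => [->|ji]; first by rewrite y1 w_facet mulr0 addr0.
by have := w_pos j ji; have := K_ge j; nia.
Qed.

End Facets.


(** * The trace of the canonical module *)

Lemma sum_neq0 (V : zmodType) (I : eqType) (s : seq I) (F : I -> V) :
  \sum_(i <- s) F i != 0 -> exists2 i, i \in s & F i != 0.
Proof.
elim: s => [|x s IHs]; first by rewrite big_nil eqxx.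
rewrite big_cons; case: (eqVneq (F x) 0) => [->|Fx _]; last by exists x; rewrite ?mem_head.
by rewrite add0r => /IHs [i s_i Fi]; exists i; rewrite ?inE ?s_i ?orbT.
Qed.

Section MonomialAlgebra.
Variables (K : monomType) (R : nzRingType).

Lemma malgUC (c : R) (u : K) : << c *g u >> = c%:MP * (<< u >> : {malg R[K]}).
Proof. by rewrite malgM_def fgmulUU mulr1 mul1m. Qed.

Lemma mcoeffU1M (u v : K) (g : {malg R[K]}) : injective (mmul u) ->
  (<< u >> * g)@_(mmul u v) = g@_v.
Proof.
move=> mmulI; rewrite malgM_def fgmulUg raddf_sum [in RHS](monalgE g) raddf_sum.
apply: eq_bigr => w _; rewrite /= mul1r !mcoeffU.
by rewrite (inj_eq mmulI).
Qed.

End MonomialAlgebra.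

Section Exponents.
Variable d : nat.

Lemma m0ptM (u v : M0 d) : m0pt (mmul u v) = m0pt u + m0pt v.
Proof. by rewrite /m0pt /= PoszD. Qed.

Lemma m0pt_inj : injective (@m0pt d).
Proof.
by move=> [[x k] ?] [[y l] ?] [/= x_y [k_l]]; apply: val_inj; rewrite /= x_y k_l.
Qed.

Lemma mmulI (u : M0 d) : injective (mmul u).
Proof. by move=> v w /(congr1 (@m0pt d)); rewrite !m0ptM => /addrI /m0pt_inj. Qed.

(* Junk unless p = 0 or p has positive height (see [m0_of_ptK]). *)
Definition m0_of_pt (p : 'rV[int]_d * int) : M0 d := insubd (mone : M0 d) (p.1, `|p.2|%N).

Lemma m0_of_ptK p : p = 0 \/ 0 < p.2 -> m0pt (m0_of_pt p) = p.
Proof.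
move=> p_graded; rewrite /m0_of_pt /m0pt insubdK /=.
  by case: p_graded => [->|/gtz0_abs ->] //; rewrite -surjective_pairing.
case: p_graded => [->|p_pos]; first exact: m0_one_proof.
apply/implyP => /eqP.
by move/(congr1 Posz); rewrite gtz0_abs // => p2_0; move: p_pos; rewrite p2_0.
Qed.

End Exponents.

Section EhrhartRing.
Variables (k : fieldType) (d m : nat) (N : 'I_m -> 'rV[int]_d) (h : 'I_m -> int).
Hypothesis C_graded : forall p, inC N h p -> p = 0 \/ 0 < p.2.

Local Notation MA := {malg k[M0 d]}.

Lemma inC_m0_of_ptK p : inC N h p -> m0pt (m0_of_pt p) = p.
Proof. by move/C_graded/m0_of_ptK. Qed.

Lemma inA_monomial (c : k) (u : M0 d) : inC N h (m0pt u) -> inA N h << c *g u >>.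
Proof. by move=> Cu v; rewrite mcoeffU; case: (eqVneq u v) => [<- //|_]; rewrite mulr0n eqxx. Qed.

Lemma in_omega_monomial (c : k) (u : M0 d) :
  inInt N h (m0pt u) -> in_omega N h << c *g u >>.
Proof. by move=> Iu v; rewrite mcoeffU; case: (eqVneq u v) => [<- //|_]; rewrite mulr0n eqxx. Qed.

Lemma in_omega_inA (w : MA) : in_omega N h w -> inA N h w.
Proof. by move=> w_omega p /w_omega /inInt_inC. Qed.

Lemma in_omega0 : in_omega N h (0 : MA).
Proof. by move=> p; rewrite mcoeff0 eqxx. Qed.

Lemma in_omegaD (w1 w2 : MA) :
  in_omega N h w1 -> in_omega N h w2 -> in_omega N h (w1 + w2).
Proof.
move=> w1_omega w2_omega p; rewrite mcoeffD.
by case: (eqVneq w1@_p 0) => [->|/w1_omega //]; rewrite add0r => /w2_omega.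
Qed.

Lemma hom_omega_id : is_hom_omega N h (@id MA).
Proof. by split=> //; exact: in_omega_inA. Qed.

Section HomOmega.
Variable phi : MA -> MA.
Hypothesis phi_hom : is_hom_omega N h phi.

Lemma hom_omega0 : phi 0 = 0.
Proof.
have [_ phiD _] := phi_hom.
have := phiD 0 0 in_omega0 in_omega0.
by rewrite addr0 => /(congr1 (fun v => v - phi 0)); rewrite addrK subrr.
Qed.

Lemma hom_omega_sum (I : Type) (r : seq I) (P : pred I) (F : I -> MA) :
  (forall i, P i -> in_omega N h (F i)) ->
  phi (\sum_(i <- r | P i) F i) = \sum_(i <- r | P i) phi (F i).
Proof.
have [_ phiD _] := phi_hom; move=> F_omega.
pose K w v := in_omega N h w /\ phi w = v.
suff [] : K (\sum_(i <- r | P i) F i) (\sum_(i <- r | P i) phi (F i)) by [].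
apply: big_ind2 => [|w1 v1 w2 v2 [w1_omega <-] [w2_omega <-]|i /F_omega //].
  by split; [exact: in_omega0 | exact: hom_omega0].
by split; [exact: in_omegaD | exact: phiD].
Qed.

Lemma hom_omegaZ (c : k) (u : M0 d) :
  inInt N h (m0pt u) -> phi << c *g u >> = c *: phi << u >>.
Proof.
have [_ _ phiM] := phi_hom; move=> Iu.
rewrite malgUC phiM -?mul_malgC //; last exact: in_omega_monomial.
by apply: inA_monomial => i; rewrite /= mul0r oppr0 raddf0.
Qed.

Lemma hom_omegaE (w : MA) :
  in_omega N h w -> phi w = \sum_(u <- msupp w) w@_u *: phi << u >>.
Proof.
move=> w_omega; rewrite {1}(monalgE w) big_seq [RHS]big_seq hom_omega_sum.
  by apply: eq_bigr => u u_supp; apply: hom_omegaZ; apply: w_omega; rewrite mcoeff_neq0.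
by move=> u u_supp; apply: in_omega_monomial; apply: w_omega; rewrite mcoeff_neq0.
Qed.

Lemma hom_omega_supp (u u' v : M0 d) : inInt N h (m0pt u) -> inInt N h (m0pt u') ->
  (phi << u >>)@_v != 0 -> inC N h (m0pt u' + m0pt v - m0pt u).
Proof.
have [phiA _ phiM] := phi_hom; move=> Iu Iu' phi_uv.
have phi_comm : << u' >> * phi << u >> = << u >> * phi << u' >>.
  have monoA (w : M0 d) : inInt N h (m0pt w) -> inA N h (<< w >> : MA).
    by move=> Iw; apply: inA_monomial; exact: inInt_inC.
  have phiM_u'u := phiM _ _ (monoA _ Iu') (in_omega_monomial (c := 1) Iu).
  have phiM_uu' := phiM _ _ (monoA _ Iu) (in_omega_monomial (c := 1) Iu').
  exact: etrans (esym phiM_u'u) (etrans (congr1 phi (mulrC _ _)) phiM_uu').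
have coef_u'v := mcoeffU1M v (phi << u >>) (@mmulI d u').
have : (<< u' >> * phi << u >>)@_(mmul u' v) != 0 by rewrite coef_u'v.
rewrite phi_comm mcoeff_neq0 => /msuppM_le [u1 [w [+ w_supp u'v_uw]]].
rewrite msuppU1 => /fset1P u1_u; subst u1.
have := congr1 (@m0pt d) u'v_uw; rewrite !m0ptM => ->.
by rewrite addrC addKr; apply: (phiA _ (in_omega_monomial (c := 1) Iu')); rewrite mcoeff_neq0.
Qed.

End HomOmega.

Lemma in_trace_coef (f : MA) (v : M0 d) : in_trace N h f -> f@_v != 0 ->
  exists phi (u : M0 d),
    [/\ is_hom_omega N h phi, inInt N h (m0pt u) & (phi (<< u >> : MA))@_v != 0].
Proof.
move=> [n [phi [w [phi_hom w_omega ->]]]]; rewrite raddf_sum => /sum_neq0 [i _].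
have phi_i_hom := phi_hom i.
rewrite hom_omegaE // raddf_sum => /sum_neq0 [u u_supp].
rewrite /= mcoeffZ mulf_eq0 negb_or => /andP [_ phi_uv].
by exists (phi i), u; split=> //; apply: (w_omega i); rewrite mcoeff_neq0.
Qed.

Lemma nearly_gorenstein_cone_cond :
  (forall i, exists u, inInt N h u /\ slack N h i u = 1) ->
  nearly_gorenstein k N h -> cone_cond N h.
Proof.
move=> facet_unit NG p Cp p_neq0.
have p_pos : 0 < p.2 by case: (C_graded Cp).
pose v := m0_of_pt p; have v_p : m0pt v = p := inC_m0_of_ptK Cp.
have v_max : in_max_ideal N h (<< v >> : MA).
  split=> q; rewrite mcoeff_neq0 msuppU1 => /fset1P ->; first by rewrite v_p.
  by rewrite -ltz_nat -[X in _ < X]/(m0pt v).2 v_p.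
have v_coef : (<< v >> : MA)@_v != 0 by rewrite mcoeffU1 eqxx oner_neq0.
have [phi [u [phi_hom Iu phi_uv]]] := in_trace_coef (NG _ v_max) v_coef.
exists (m0pt u), (p - m0pt u); split=> //; last first.
  by rewrite -[RHS]/(m0pt u + (p - m0pt u)) addrC subrK.
apply/inAntE => i; have [u'p [Iu'p u'_unit]] := facet_unit i.
pose u' := m0_of_pt u'p; have u'_p : m0pt u' = u'p := inC_m0_of_ptK (inInt_inC Iu'p).
have Iu' : inInt N h (m0pt u') by rewrite u'_p.
have /inCE/(_ i) := hom_omega_supp phi_hom Iu Iu' phi_uv.
rewrite u'_p v_p -addrA raddfD /= u'_unit => slack_ge0.
by rewrite -(lerD2l 1) addrN.
Qed.

Definition shift (r : 'rV[int]_d * int) : MA -> MA :=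
  mmap (@mkmalgU (M0 d) k mone) (fun u => << m0_of_pt (m0pt u + r) >>).

Lemma shiftD r : {morph shift r : w1 w2 / w1 + w2}.
Proof. exact: mmapD. Qed.

Lemma shift_sum r (I : Type) (s : seq I) (P : pred I) (F : I -> MA) :
  shift r (\sum_(i <- s | P i) F i) = \sum_(i <- s | P i) shift r (F i).
Proof. by apply: (big_morph (shift r)) => [w1 w2|]; [exact: shiftD | rewrite /shift mmap0]. Qed.

Section Shift.
Variable r : 'rV[int]_d * int.
Hypothesis r_ant : inAnt N h r.

Lemma shiftU (c : k) (u : M0 d) :
  shift r << c *g u >> = << c *g m0_of_pt (m0pt u + r) >>.
Proof. by rewrite /shift mmapU [RHS]malgUC. Qed.

Lemma shift_inA (w : MA) : in_omega N h w -> inA N h (shift r w).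
Proof.
move=> w_omega p; rewrite /shift mmapE raddf_sum => /sum_neq0 [u u_supp].
rewrite /= mcoeffCM mulf_eq0 negb_or => /andP [_].
rewrite mcoeff_neq0 msuppU1 => /fset1P ->.
have Ipr : inC N h (m0pt u + r).
  by apply: inC_addIntAnt => //; apply: w_omega; rewrite mcoeff_neq0.
by rewrite inC_m0_of_ptK.
Qed.

Lemma shift_monomialM (s u : M0 d) : inC N h (m0pt s) -> inInt N h (m0pt u) ->
  mmul s (m0_of_pt (m0pt u + r)) = m0_of_pt (m0pt (mmul s u) + r).
Proof.
move=> Cs Iu; have Cur := inC_addIntAnt Iu r_ant.
have Csur : inC N h (m0pt s + (m0pt u + r)).
  by apply/inCE => i; rewrite raddfD /=; move/inCE: Cs => /(_ i); move/inCE: Cur => /(_ i); lia.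
by apply: m0pt_inj; rewrite !m0ptM (inC_m0_of_ptK Cur) -addrA inC_m0_of_ptK.
Qed.

Lemma shiftM (a w : MA) : inA N h a -> in_omega N h w -> shift r (a * w) = a * shift r w.
Proof.
move=> a_A w_omega; rewrite malgME shift_sum [in RHS](monalgE a) [in RHS](monalgE w).
rewrite [in RHS]shift_sum mulr_suml; apply: eq_big_seq => s s_supp.
have Cs : inC N h (m0pt s) by apply: a_A; rewrite mcoeff_neq0.
rewrite shift_sum mulr_sumr; apply: eq_big_seq => u u_supp.
have Iu : inInt N h (m0pt u) by apply: w_omega; rewrite mcoeff_neq0.
by rewrite [in RHS]shiftU shiftU malgM_def fgmulUU (shift_monomialM Cs Iu).
Qed.

Lemma shift_hom : is_hom_omega N h (shift r).
Proof.
by split=> [||a w]; [exact: shift_inA | move=> w1 w2 _ _; exact: shiftD | exact: shiftM].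
Qed.

End Shift.

Lemma in_trace0 : in_trace N h (0 : MA).
Proof.
exists 0%N, (fun _ => id), (fun _ => 0).
by split=> [_|_|]; [exact: hom_omega_id | exact: in_omega0 | rewrite big_ord0].
Qed.

Lemma in_traceD (f g : MA) : in_trace N h f -> in_trace N h g -> in_trace N h (f + g).
Proof.
move=> [n1 [phi1 [w1 [phi1_hom w1_omega ->]]]] [n2 [phi2 [w2 [phi2_hom w2_omega ->]]]].
exists (n1 + n2)%N, (fun i => match split i with inl j => phi1 j | inr j => phi2 j end),
  (fun i => match split i with inl j => w1 j | inr j => w2 j end).
split=> [i|i|]; try by case: split.
rewrite big_split_ord; congr (_ + _); apply: eq_bigr => i _.
  by rewrite (unsplitK (inl i : 'I_n1 + 'I_n2)).
by rewrite (unsplitK (inr i : 'I_n1 + 'I_n2)).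
Qed.

Lemma in_trace_monomial (c : k) (v : M0 d) : cone_cond N h ->
  inC N h (m0pt v) -> m0pt v <> 0 -> in_trace N h << c *g v >>.
Proof.
move=> cone Cv v_neq0; have [q [r [Iq r_ant v_qr]]] := cone _ Cv v_neq0.
have q_m0 : m0pt (m0_of_pt q) = q := inC_m0_of_ptK (inInt_inC Iq).
exists 1%N, (fun _ => shift r), (fun _ => << c *g m0_of_pt q >>).
split=> [_|_|]; first exact: shift_hom.
  by apply: in_omega_monomial; rewrite q_m0.
rewrite big_ord1 shiftU q_m0 (_ : m0_of_pt (q + r) = v) //.
by apply: m0pt_inj; rewrite inC_m0_of_ptK -?v_qr //; exact: inC_addIntAnt.
Qed.

Lemma cone_cond_nearly_gorenstein : cone_cond N h -> nearly_gorenstein k N h.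
Proof.
move=> cone f [f_A f_pos]; rewrite (monalgE f) big_seq.
apply: big_ind => [||v v_supp]; [exact: in_trace0 | exact: in_traceD |].
have f_v : f@_v != 0 by rewrite mcoeff_neq0.
apply: in_trace_monomial => // [|/(congr1 snd) /= /eqP]; first exact: f_A.
by apply/negP; rewrite -lt0n f_pos.
Qed.

End EhrhartRing.

(** * Slices of the cone *)

Section Slices.
Variables (d m : nat) (N : 'I_m -> 'rV[int]_d) (h : 'I_m -> int).
Hypothesis m_gt0 : (0 < m)%N.
Hypothesis C_graded : forall p, inC N h p -> p = 0 \/ 0 < p.2.

Lemma inInt_height_gt0 p : inInt N h p -> 0 < p.2.
Proof.
move=> Ip; case: (C_graded (inInt_inC Ip)) => // p0.
by have := Ip (Ordinal m_gt0); rewrite p0 /= mul0r oppr0 raddf0 ltxx.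
Qed.

Lemma codegree_le_height a q : is_codegree N h a -> inInt N h q -> a%:Z <= q.2.
Proof.
case=> _ _ a_min Iq; have q_pos := inInt_height_gt0 Iq.
have q2E : q.2 = (`|q.2|%N)%:Z by rewrite gtz0_abs.
rewrite leNgt; apply/negP => q_lt_a; apply: (a_min `|q.2|%N _ _ q.1).
- by rewrite -ltz_nat -q2E.
- by rewrite -ltz_nat -q2E.
- by rewrite -q2E -surjective_pairing.
Qed.

Lemma cone_cond_slice_cond a : is_codegree N h a -> cone_cond N h -> slice_cond N h a.
Proof.
move=> a_codeg cone x; split=> [Cx|[y [z [Iy Az ->]]]]; last first.
  rewrite (_ : (y + z, 1) = (y, a%:Z) + (z, 1 - a%:Z)); first exact: inC_addIntAnt.
  by rewrite -[RHS]/(y + z, a%:Z + (1 - a%:Z)) [a%:Z + _]addrC subrK.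
have x1_neq0 : (x, 1) <> (0, 0) :> 'rV[int]_d * int by case=> _; lia.
have [q [r [Iq r_ant [x_qr q2_r2]]]] := cone _ Cx x1_neq0.
have a_le_q := codegree_le_height a_codeg Iq.
have [_ [xc Ixc] _] := a_codeg.
case: (ltrP a%:Z q.2) => [a_lt_q|q_le_a].
  have /addr0_eq r_E : (xc, a%:Z) + r = 0.
    by case: (C_graded (inC_addIntAnt Ixc r_ant)) => //=; lia.
  exists xc, (x - xc); split=> //; last by rewrite addrC subrK.
  by rewrite -[(x - xc, _)]/((x, 1) + - (xc, a%:Z)) r_E; exact: inAnt_addC.
have q2_a : q.2 = a%:Z by apply/eqP; rewrite eq_le q_le_a.
exists q.1, r.1; split=> //; first by rewrite -q2_a -surjective_pairing.
by rewrite (_ : 1 - a%:Z = r.2) -?surjective_pairing //; lia.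
Qed.

Lemma slice_cond_cone_cond a : IDP N h -> slice_cond N h a -> cone_cond N h.
Proof.
move=> idp slice p Cp p_neq0.
have p_pos : 0 < p.2 by case: (C_graded Cp).
have p2E : p.2 = (`|p.2|%N)%:Z by rewrite gtz0_abs.
have k_gt0 : (0 < `|p.2|)%N by rewrite -ltz_nat -p2E.
have Cp' : inC N h (p.1, (`|p.2|%N)%:Z) by rewrite -p2E -surjective_pairing.
have [v [Pv p1_sum]] := idp _ k_gt0 _ Cp'.
pose j0 := Ordinal k_gt0.
have [y [z [Iy z_ant v0_yz]]] := (slice (v j0)).1 (Pv j0).
exists (y, a%:Z), (p - (y, a%:Z)); split=> //.
  apply/inAntE => i.
  have slack_p : slack N h i p = \sum_j slack N h i (v j, 1).
    rewrite /slack p1_sum raddf_sum big_split /= sumr_const card_ord [in p.2 * _]p2E.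
    by rewrite mul1r -natz mulr_natl.
  have slack_v0 : slack N h i (v j0, 1) = slack N h i (y, a%:Z) + slack N h i (z, 1 - a%:Z).
    by rewrite /slack v0_yz raddfD /=; ring.
  have slack_r : slack N h i (p - (y, a%:Z)) =
      slack N h i (z, 1 - a%:Z) + \sum_(j | j != j0) slack N h i (v j, 1).
    by rewrite raddfB /= slack_p (bigD1 j0) //= slack_v0; ring.
  rewrite slack_r -[-1]addr0; apply: lerD; first by move/inAntE: z_ant.
  by apply: sumr_ge0 => j _; move/inCE: (Pv j).
by rewrite -[RHS]/((y, a%:Z) + (p - (y, a%:Z))) addrC subrK.
Qed.

End Slices.

Lemma no_facets_conditions (k : fieldType) (d : nat) (N : 'I_0 -> 'rV[int]_d)
  (h : 'I_0 -> int) (a : nat) :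
  [/\ nearly_gorenstein k N h, cone_cond N h & slice_cond N h a].
Proof.
split.
- move=> f _; exists 1%N, (fun _ => id), (fun _ => f).
  by split=> [_|_ p _ i|]; [exact: hom_omega_id | case: i | rewrite big_ord1].
- move=> p _ _; exists p, 0.
  by split=> [i|i|]; [case: i | case: i | rewrite -[RHS]/(p + 0) addr0].
- move=> x; split=> [_|_ i]; last by case: i.
  by exists x, 0; split=> [i|i|]; [case: i | case: i | rewrite addr0].
Qed.

Unset Implicit Arguments.

Theorem proposition3p2 (k : fieldType)
  (k_infinite : forall s : seq k, exists x : k, x \notin s)
  (R : realType) (d m : nat) (N : 'I_m -> 'rV[int]_d) (h : 'I_m -> int)
  (N_primitive : forall i, primitive (N i))
  (P_lattice : lattice_polytope R N h)
  (P_fulldim : full_dim R N h)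
  (P_irredundant : irredundant R N h)
  (a : nat) (a_codeg : is_codegree N h a) :
  (nearly_gorenstein k N h <-> cone_cond N h) /\
  (nearly_gorenstein k N h -> slice_cond N h a) /\
  (IDP N h -> slice_cond N h a -> nearly_gorenstein k N h).
Proof.
case: (posnP m) => [m0|m_gt0].
  subst m; have [NG cone slice] := no_facets_conditions k N h a.
  by split; [split | split].
have C_graded := lattice_cone_graded P_lattice P_fulldim m_gt0.
have facet_units := facet_unit P_lattice P_fulldim P_irredundant N_primitive.
have NG_cone := nearly_gorenstein_cone_cond (k := k) C_graded facet_units.
have cone_NG := cone_cond_nearly_gorenstein (k := k) C_graded.
split; first by split; [exact: NG_cone | exact: cone_NG].
split=> [/NG_cone|idp slice].
  exact: (cone_cond_slice_cond m_gt0 C_graded a_codeg).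
exact/cone_NG/(slice_cond_cone_cond C_graded idp slice).
Qed.
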